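(* Let $\mathrm{M}$ be the 2-space group $632$ (IT number 16, $p6$), so that $E^2/\mathrm{M}$ is a turnover with three cone points obtained by gluing two congruent $30^\circ$–$60^\circ$ right triangles along their boundaries. Let c-ref. denote the central reflection of $E^2/\mathrm{M}$ interchanging the two triangles. Then $\mathrm{Sym}(\mathrm{M})=\mathrm{Aff}(\mathrm{M})=\{\mathrm{idt.},\ \text{c-ref.}\}$, and $\Omega:\mathrm{Aff}(\mathrm{M})\to\mathrm{Out}(\mathrm{M})$ is an isomorphism.
   Context: A 2-space group is a discrete group of isometries of $E^2$ with compact quotient. Affine maps of $E^2$ are written $a+A$ ($x\mapsto a+Ax$). For a 2-space group $\mathrm{M}$, let $N_A(\mathrm{M})$ be its normalizer in the affine group of $E^2$; each $a+A\in N_A(\mathrm{M})$ induces an affinity $(a+A)_\star:\mathrm{M}x\mapsto\mathrm{M}(a+Ax)$ of the flat orbifold $E^2/\mathrm{M}$. $\mathrm{Aff}(\mathrm{M})$ is the group of all such affinities and $\mathrm{Sym}(\mathrm{M})=\mathrm{Isom}(E^2/\mathrm{M})$ its subgroup of isometries; idt. is the identity. $\Omega:\mathrm{Aff}(\mathrm{M})\to\mathrm{Out}(\mathrm{M})$ sends $(a+A)_\star$ to the outer automorphism class of $g\mapsto(a+A)g(a+A)^{-1}$ on $\mathrm{M}$. *)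

From Stdlib Require Import Reals ZArith.
From Coquelicot Require Import Coquelicot.
Open Scope R_scope.

(** Affine maps x |-> a + A x of E^2, a = (b1,b2), A = [[m11,m12],[m21,m22]]. *)
Record affmap := AffMap { b1 : R; b2 : R; m11 : R; m12 : R; m21 : R; m22 : R }.

Definition pt := (R * R)%type.

Definition aff_app (f : affmap) (x : pt) : pt :=
  (b1 f + m11 f * fst x + m12 f * snd x, b2 f + m21 f * fst x + m22 f * snd x).

Definition aff_comp (f g : affmap) : affmap :=
  AffMap (b1 f + m11 f * b1 g + m12 f * b2 g)
         (b2 f + m21 f * b1 g + m22 f * b2 g)
         (m11 f * m11 g + m12 f * m21 g) (m11 f * m12 g + m12 f * m22 g)
         (m21 f * m11 g + m22 f * m21 g) (m21 f * m12 g + m22 f * m22 g).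

Definition aff_det (f : affmap) : R := m11 f * m22 f - m12 f * m21 f.

Definition is_affine (f : affmap) : Prop := aff_det f <> 0.

(** inverse (meaningful when det <> 0) *)
Definition aff_inv (f : affmap) : affmap :=
  let d := aff_det f in
  let i11 := m22 f / d in let i12 := - m12 f / d in
  let i21 := - m21 f / d in let i22 := m11 f / d in
  AffMap (- (i11 * b1 f + i12 * b2 f)) (- (i21 * b1 f + i22 * b2 f)) i11 i12 i21 i22.

Definition aff_id : affmap := AffMap 0 0 1 0 0 1.

Definition transl (v : pt) : affmap := AffMap (fst v) (snd v) 1 0 0 1.

Definition rot60 : affmap := AffMap 0 0 (1/2) (- (sqrt 3 / 2)) (sqrt 3 / 2) (1/2).

(** The 2-space group M = 632 (p6): hexagonal lattice Z e1 + Z e2 with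
    e1 = (1,0), e2 = (1/2, sqrt 3 / 2), together with the rotations by
    multiples of 60 degrees about the origin. *)
Definition inM (g : affmap) : Prop :=
  exists (m n : Z) (k : nat),
    g = aff_comp (transl (IZR m + IZR n / 2, IZR n * (sqrt 3 / 2)))
                 (Nat.iter k (aff_comp rot60) aff_id).

Definition inNA (f : affmap) : Prop :=
  is_affine f /\
  (forall g, inM g -> inM (aff_comp f (aff_comp g (aff_inv f)))) /\
  (forall g, inM g -> inM (aff_comp (aff_inv f) (aff_comp g f))).

(** points of the orbifold E^2/M are orbits M x *)
Definition same_orbit (x y : pt) : Prop := exists g, inM g /\ aff_app g x = y.

(** equality of the induced affinities f_* and g_* of E^2/M *)
Definition induced_eq (f g : affmap) : Prop :=
  forall x, same_orbit (aff_app f x) (aff_app g x).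

(** the reflection in the x-axis; its induced affinity is c-ref. *)
Definition refl_x : affmap := AffMap 0 0 1 0 0 (-1).

(** Euclidean distance and the orbit-space metric on E^2/M *)
Definition edist (x y : pt) : R :=
  sqrt ((fst x - fst y) ^ 2 + (snd x - snd y) ^ 2).

Definition qdist (x y : pt) : Rbar :=
  Glb_Rbar (fun r => exists g, inM g /\ r = edist x (aff_app g y)).

Definition induced_isometry (f : affmap) : Prop :=
  forall x y, qdist (aff_app f x) (aff_app f y) = qdist x y.

Definition is_autM (alpha : affmap -> affmap) : Prop :=
  (forall g, inM g -> inM (alpha g)) /\
  (forall g h, inM g -> inM h -> alpha (aff_comp g h) = aff_comp (alpha g) (alpha h)) /\
  (forall g h, inM g -> inM h -> alpha g = alpha h -> g = h) /\
  (forall h, inM h -> exists g, inM g /\ alpha g = h).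

(** equality in Out(M): alpha and beta differ by an inner automorphism *)
Definition out_eq (alpha beta : affmap -> affmap) : Prop :=
  exists h, inM h /\
    forall g, inM g -> alpha g = aff_comp h (aff_comp (beta g) (aff_inv h)).

(** g |-> f g f^-1 ; Omega(f_* ) is its class in Out(M) *)
Definition conj_by (f : affmap) : affmap -> affmap :=
  fun g => aff_comp f (aff_comp g (aff_inv f)).

(* Identify E^2 with C.  Then M consists of the maps z |-> v + u z with v in the ring of
   Eisenstein integers Z[omega], omega = e^(i pi/3), and u one of its six units.
   An affine map f normalizing M conjugates z |-> omega z to a rotation with the same trace,
   i.e. by omega or conj omega; this forces f to be z |-> v + u z or z |-> v + u conj z.
   Conjugating z |-> z + 1 by f and by f^-1 shows that u and 1/u lie in Z[omega], so u is a
   unit, and v lies in Z[omega] because f(0) is the centre of the conjugated rotation.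
   Hence N_A(M) is the union of M and M c, with c : z |-> conj z, which gives
   Aff(M) = {idt., c-ref.}, and all these maps are isometries.  Conversely, an automorphism
   alpha of M maps z |-> z + 1 to a translation z |-> z + p (every other element of M has
   order dividing 6), and maps z |-> omega z to a rotation z |-> w + t z with
   t^2 - t + 1 = 0, i.e. t = omega or conj omega; conjugation by z |-> t w + p z
   (resp. by z |-> t w + p conj z) agrees with alpha on these two generators of M,
   hence on M. *)

From Stdlib Require Import Reals ZArith Lia Lra Nsatz.
From Coquelicot Require Import Coquelicot.
Open Scope R_scope.

(** * The affine group *)

Lemma comp_assoc f g h : aff_comp f (aff_comp g h) = aff_comp (aff_comp f g) h.
Proof. destruct f, g, h; unfold aff_comp; simpl; f_equal; ring. Qed.

Lemma comp_id_l f : aff_comp aff_id f = f.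
Proof. destruct f; unfold aff_comp; simpl; f_equal; ring. Qed.

Lemma comp_id_r f : aff_comp f aff_id = f.
Proof. destruct f; unfold aff_comp; simpl; f_equal; ring. Qed.

Lemma aff_det_comp f g : aff_det (aff_comp f g) = aff_det f * aff_det g.
Proof. destruct f, g; unfold aff_det, aff_comp; simpl; ring. Qed.

Lemma is_affine_comp f g : is_affine f -> is_affine g -> is_affine (aff_comp f g).
Proof.
  intros Hf Hg. unfold is_affine; rewrite aff_det_comp. now apply Rmult_integral_contrapositive.
Qed.

Lemma aff_inv_r f : is_affine f -> aff_comp f (aff_inv f) = aff_id.
Proof.
  destruct f; unfold is_affine, aff_comp, aff_inv, aff_id, aff_det; simpl.
  intro; f_equal; field; auto.
Qed.

Lemma aff_inv_l f : is_affine f -> aff_comp (aff_inv f) f = aff_id.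
Proof.
  destruct f; unfold is_affine, aff_comp, aff_inv, aff_id, aff_det; simpl.
  intro; f_equal; field; auto.
Qed.

Lemma aff_inv_inv f : is_affine f -> aff_inv (aff_inv f) = f.
Proof.
  destruct f; unfold is_affine, aff_inv, aff_det; simpl.
  intro; f_equal; field; auto.
Qed.

Lemma aff_inv_id : aff_inv aff_id = aff_id.
Proof. unfold aff_inv, aff_id, aff_det; simpl; f_equal; field. Qed.

Lemma is_affine_inv f : is_affine f -> is_affine (aff_inv f).
Proof.
  intros Hf Hi. apply Hf.
  assert (H := aff_det_comp (aff_inv f) f).
  rewrite aff_inv_l, Hi in H by exact Hf. unfold aff_det, aff_id in H; simpl in H. lra.
Qed.

Lemma aff_inv_comp f g : is_affine f -> is_affine g ->
  aff_inv (aff_comp f g) = aff_comp (aff_inv g) (aff_inv f).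
Proof.
  intros Hf Hg. pose proof (is_affine_comp f g Hf Hg) as Hfg.
  revert Hf Hg Hfg. destruct f, g; unfold is_affine, aff_comp, aff_inv, aff_det; simpl.
  intros; f_equal; field; auto.
Qed.

Lemma aff_inv_unique f g : is_affine g -> aff_comp f g = aff_id -> f = aff_inv g.
Proof.
  intros Hg H. now rewrite <- (comp_id_r f), <- (aff_inv_r g), comp_assoc, H, comp_id_l.
Qed.

Lemma aff_app_comp f g x : aff_app (aff_comp f g) x = aff_app f (aff_app g x).
Proof. destruct f, g, x; unfold aff_app, aff_comp; simpl; f_equal; ring. Qed.

Lemma aff_app_id x : aff_app aff_id x = x.
Proof. destruct x; unfold aff_app, aff_id; simpl; f_equal; ring. Qed.

Lemma aff_app_inv_l f x : is_affine f -> aff_app (aff_inv f) (aff_app f x) = x.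
Proof. intro Hf. now rewrite <- aff_app_comp, aff_inv_l, aff_app_id. Qed.

Lemma conj_by_id f : is_affine f -> conj_by f aff_id = aff_id.
Proof. intro Hf. unfold conj_by. now rewrite comp_id_l, aff_inv_r. Qed.

Lemma conj_by_comp f g h : is_affine f ->
  conj_by f (aff_comp g h) = aff_comp (conj_by f g) (conj_by f h).
Proof.
  intro Hf. unfold conj_by. rewrite <- !comp_assoc.
  now rewrite (comp_assoc (aff_inv f) f), aff_inv_l, comp_id_l.
Qed.

Lemma conj_by_aff_comp f g k : is_affine f -> is_affine g ->
  conj_by (aff_comp f g) k = conj_by f (conj_by g k).
Proof.
  intros Hf Hg. unfold conj_by. rewrite aff_inv_comp by assumption.
  now rewrite <- !comp_assoc.
Qed.

Lemma conj_by_intertwines f g h : is_affine f -> conj_by f g = h ->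
  aff_comp f g = aff_comp h f.
Proof.
  intros Hf <-. unfold conj_by. now rewrite <- !comp_assoc, aff_inv_l, comp_id_r.
Qed.

Definition aff_pow (g : affmap) (n : nat) : affmap := Nat.iter n (aff_comp g) aff_id.

Lemma aff_pow_0 g : aff_pow g 0 = aff_id.
Proof. reflexivity. Qed.

Lemma aff_pow_S g n : aff_pow g (S n) = aff_comp g (aff_pow g n).
Proof. reflexivity. Qed.

(** * The Eisenstein integers *)

Local Open Scope C_scope.

Definition omega : C := (1 / 2, sqrt 3 / 2)%R.

Lemma sqrt3_sq : (sqrt 3 * sqrt 3 = 3)%R.
Proof. apply sqrt_sqrt; lra. Qed.

Lemma sqrt3_pos : (0 < sqrt 3)%R.
Proof. apply sqrt_lt_R0; lra. Qed.

Lemma omega_sq : omega * omega = omega - 1.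
Proof.
  pose proof sqrt3_sq. unfold omega.
  apply injective_projections; simpl; field_simplify; lra.
Qed.

Lemma omega_conj : Cconj omega = 1 - omega.
Proof. unfold omega. apply injective_projections; simpl; field. Qed.

Lemma omega_pow6 : omega ^ 6 = 1.
Proof. simpl. ring [omega_sq]. Qed.

Lemma Cmult_eq0 (a b : C) : a * b = 0 -> a = 0 \/ b = 0.
Proof.
  intro H. destruct (Ceq_dec a 0) as [Ha|Ha]; [now left|right].
  replace b with (/ a * (a * b)) by (field; exact Ha). rewrite H. ring.
Qed.

Lemma RtoC_conj (r : R) : Cconj (RtoC r) = RtoC r.
Proof. apply injective_projections; simpl; ring. Qed.

Definition conjb (b : bool) (z : C) : C := if b then Cconj z else z.

Lemma conjb_involutive b (z : C) : conjb b (conjb b z) = z.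
Proof. destruct b; [apply Cconj_conj|reflexivity]. Qed.

Lemma conjb_1 b : conjb b 1 = 1.
Proof. destruct b; simpl; [apply injective_projections; simpl; ring|reflexivity]. Qed.

Lemma conjb_0 b : conjb b 0 = 0.
Proof. destruct b; simpl; [apply injective_projections; simpl; ring|reflexivity]. Qed.

Lemma conjb_omega_mul b : conjb b omega * (1 - conjb b omega) = 1.
Proof. destruct b; simpl; [rewrite omega_conj|]; ring [omega_sq]. Qed.

Lemma omega_roots (t : C) : t * t - t + 1 = 0 -> exists b, t = conjb b omega.
Proof.
  intro H. assert (F : (t - omega) * (t - Cconj omega) = 0)
    by (rewrite omega_conj, <- H; ring [omega_sq]).
  apply Cmult_eq0 in F as [F|F]; [exists false|exists true]; now apply Ceq_minus.
Qed.

Definition eisenstein (z : C) : Prop := exists m n : Z, z = IZR m + IZR n * omega.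

Ltac push_IZR :=
  rewrite ?plus_IZR, ?minus_IZR, ?mult_IZR, ?opp_IZR,
          ?RtoC_plus, ?RtoC_minus, ?RtoC_mult, ?RtoC_opp.

Lemma eisenstein_int (m : Z) : eisenstein (IZR m).
Proof. exists m, 0%Z. ring. Qed.

Lemma eisenstein_omega : eisenstein omega.
Proof. exists 0%Z, 1%Z. ring. Qed.

Lemma eisenstein_add (z w : C) : eisenstein z -> eisenstein w -> eisenstein (z + w).
Proof.
  intros [m [n ->]] [m' [n' ->]]. exists (m + m')%Z, (n + n')%Z. push_IZR. ring.
Qed.

Lemma eisenstein_opp (z : C) : eisenstein z -> eisenstein (- z).
Proof. intros [m [n ->]]. exists (- m)%Z, (- n)%Z. push_IZR. ring. Qed.

Lemma eisenstein_mul (z w : C) : eisenstein z -> eisenstein w -> eisenstein (z * w).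
Proof.
  intros [m [n ->]] [m' [n' ->]].
  exists (m * m' - n * n')%Z, (m * n' + n * m' + n * n')%Z. push_IZR. ring [omega_sq].
Qed.

Lemma eisenstein_conj (z : C) : eisenstein z -> eisenstein (Cconj z).
Proof.
  intros [m [n ->]]. exists (m + n)%Z, (- n)%Z.
  rewrite Cplus_conj, Cmult_conj, !RtoC_conj, omega_conj. push_IZR. ring.
Qed.

Lemma eisenstein_conjb b (z : C) : eisenstein z -> eisenstein (conjb b z).
Proof. destruct b; [apply eisenstein_conj|trivial]. Qed.

Lemma eisenstein_coords (m n : Z) :
  ((IZR m + IZR n / 2)%R, (IZR n * (sqrt 3 / 2))%R) = IZR m + IZR n * omega.
Proof. unfold omega. apply injective_projections; simpl; field. Qed.

Definition norm2 (z : C) : R := (fst z * fst z + snd z * snd z)%R.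

Lemma norm2_mul (z w : C) : norm2 (z * w) = (norm2 z * norm2 w)%R.
Proof. unfold norm2; simpl; ring. Qed.

Lemma norm2_conj (z : C) : norm2 (Cconj z) = norm2 z.
Proof. unfold norm2; simpl; ring. Qed.

Lemma norm2_eq0 (z : C) : norm2 z = 0%R -> z = 0.
Proof. unfold norm2; intro H. apply injective_projections; simpl; nra. Qed.

Lemma norm2_neq0 (z : C) : z <> 0 -> norm2 z <> 0%R.
Proof. intros Hz H. exact (Hz (norm2_eq0 z H)). Qed.

Lemma norm2_eisenstein (m n : Z) :
  norm2 (IZR m + IZR n * omega) = IZR (m * m + m * n + n * n).
Proof.
  pose proof sqrt3_sq. assert (Hhalf : (/ 2 * 2 = 1)%R) by field.
  unfold norm2, omega; simpl. rewrite !plus_IZR, !mult_IZR. unfold Rdiv. nsatz.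
Qed.

Lemma eisenstein_norm2_lt1 (z : C) : eisenstein z -> (norm2 z < 1)%R -> z = 0.
Proof.
  intros [m [n ->]]. rewrite norm2_eisenstein. intro Hlt. apply lt_IZR in Hlt.
  assert (m = 0%Z /\ n = 0%Z) as [-> ->] by nia. ring.
Qed.

Definition eis_unit (u : C) : Prop := eisenstein u /\ norm2 u = 1%R.

Lemma eis_unit_neq0 (u : C) : eis_unit u -> u <> 0.
Proof. intros [_ Hn] ->. revert Hn. unfold norm2; simpl. lra. Qed.

Lemma eis_unit_inv (u : C) : eis_unit u -> / u = Cconj u.
Proof.
  intro Hu. pose proof (eis_unit_neq0 u Hu) as Hu0. destruct Hu as [_ Hn].
  assert (Hconj : u * Cconj u = 1).
  { unfold norm2 in Hn. apply injective_projections; simpl; lra. }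
  replace (Cconj u) with (/ u * (u * Cconj u)) by (field; exact Hu0).
  rewrite Hconj. ring.
Qed.

Lemma eis_unit_mul (u v : C) : eis_unit u -> eis_unit v -> eis_unit (u * v).
Proof.
  intros [Hu Nu] [Hv Nv]. split; [now apply eisenstein_mul|].
  rewrite norm2_mul, Nu, Nv; ring.
Qed.

Lemma eis_unit_conjb b (u : C) : eis_unit u -> eis_unit (conjb b u).
Proof.
  intros [Hu Nu]. split; [now apply eisenstein_conjb|].
  destruct b; simpl; [now rewrite norm2_conj|exact Nu].
Qed.

Lemma eis_unit_1 : eis_unit 1.
Proof. split; [exact (eisenstein_int 1)|unfold norm2; simpl; ring]. Qed.

Lemma eis_unit_omega : eis_unit omega.
Proof.
  split; [exact eisenstein_omega|].
  pose proof sqrt3_sq. unfold norm2, omega; simpl. field_simplify; lra.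
Qed.

Lemma eis_unit_omega_pow k : eis_unit (omega ^ k).
Proof.
  induction k as [|k IH]; [exact eis_unit_1|]. exact (eis_unit_mul _ _ eis_unit_omega IH).
Qed.

Lemma eis_unit_is_omega_pow (u : C) : eis_unit u -> exists k, u = omega ^ k.
Proof.
  intros [[m [n ->]] Hn]. rewrite norm2_eisenstein in Hn. apply eq_IZR in Hn.
  assert (Hcases : ((m = 1 /\ n = 0) \/ (m = 0 /\ n = 1) \/ (m = -1 /\ n = 1) \/
                    (m = -1 /\ n = 0) \/ (m = 0 /\ n = -1) \/ (m = 1 /\ n = -1))%Z) by nia.
  destruct Hcases as [[-> ->]|[[-> ->]|[[-> ->]|[[-> ->]|[[-> ->]|[-> ->]]]]]];
    [exists 0%nat|exists 1%nat|exists 2%nat|exists 3%nat|exists 4%nat|exists 5%nat];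
    simpl; ring [omega_sq].
Qed.

Lemma eis_unit_pow6 (u : C) : eis_unit u -> u ^ 6 = 1.
Proof.
  intro Hu. destruct (eis_unit_is_omega_pow u Hu) as [k ->].
  now rewrite <- Cpow_mult_r, Nat.mul_comm, Cpow_mult_r, omega_pow6, Cpow_1_l.
Qed.

(** * Similarities *)

(* [cmap b v u] is [z |-> v + u * z], or [z |-> v + u * conj z] when [b] is true. *)
Definition cmap (b : bool) (v u : C) : affmap :=
  if b then AffMap (fst v) (snd v) (fst u) (snd u) (snd u) (- fst u)
  else AffMap (fst v) (snd v) (fst u) (- snd u) (snd u) (fst u).

Lemma cmap_aff_id : cmap false 0 1 = aff_id.
Proof. unfold cmap, aff_id; simpl; f_equal; ring. Qed.

Lemma cmap_refl_x : cmap true 0 1 = refl_x.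
Proof. unfold cmap, refl_x; simpl; f_equal; ring. Qed.

Lemma cmap_rot60 : cmap false 0 omega = rot60.
Proof. unfold cmap, rot60, omega; simpl; f_equal; ring. Qed.

Lemma cmap_transl (v : C) : cmap false v 1 = transl v.
Proof. unfold cmap, transl; simpl; f_equal; ring. Qed.

Lemma cmap_inj b (v u v' u' : C) : cmap b v u = cmap b v' u' -> v = v' /\ u = u'.
Proof.
  destruct v, u, v', u'.
  destruct b; unfold cmap; simpl; intro H; injection H; intros; subst; auto.
Qed.

Lemma aff_app_cmap b (v u z : C) : aff_app (cmap b v u) z = v + u * conjb b z.
Proof. destruct b; apply injective_projections; simpl; ring. Qed.

Lemma cmap_comp b (v u : C) b' (v' u' : C) :
  aff_comp (cmap b v u) (cmap b' v' u') =
  cmap (xorb b b') (v + u * conjb b v') (u * conjb b u').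
Proof. destruct b, b'; unfold cmap, aff_comp; simpl; f_equal; ring. Qed.

Lemma aff_det_cmap b (v u : C) : aff_det (cmap b v u) = (if b then - norm2 u else norm2 u)%R.
Proof. destruct b; unfold aff_det, norm2; simpl; ring. Qed.

Lemma is_affine_cmap b (v u : C) : u <> 0 -> is_affine (cmap b v u).
Proof.
  intro Hu. unfold is_affine. rewrite aff_det_cmap. pose proof (norm2_neq0 u Hu).
  destruct b; lra.
Qed.

Lemma cmap_neq0 b (v u : C) : is_affine (cmap b v u) -> u <> 0.
Proof.
  intros Hf ->. apply Hf. rewrite aff_det_cmap. unfold norm2; simpl.
  destruct b; ring.
Qed.

Lemma cmap_inv b (v u : C) : u <> 0 ->
  aff_inv (cmap b v u) = cmap b (- conjb b (v / u)) (conjb b (/ u)).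
Proof.
  intro Hu. pose proof (norm2_neq0 u Hu) as Hn. unfold norm2 in Hn.
  destruct v as [v1 v2], u as [u1 u2]; simpl in Hn.
  destruct b; unfold aff_inv, cmap, aff_det; simpl; f_equal;
    field; repeat split; intro; apply Hn; nra.
Qed.

Lemma conj_by_cmap b (v u w t : C) : u <> 0 ->
  conj_by (cmap b v u) (cmap false w t) =
  cmap false ((1 - conjb b t) * v + u * conjb b w) (conjb b t).
Proof.
  intro Hu. pose proof (norm2_neq0 u Hu) as Hn. unfold norm2 in Hn.
  unfold conj_by. rewrite cmap_inv, !cmap_comp by exact Hu.
  destruct v as [v1 v2], u as [u1 u2], w as [w1 w2], t as [t1 t2]; simpl in Hn.
  destruct b; unfold cmap; simpl; f_equal;
    field; repeat split; intro; apply Hn; nra.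
Qed.

Lemma edist_cmap b (v u : C) x y : norm2 u = 1%R ->
  edist (aff_app (cmap b v u) x) (aff_app (cmap b v u) y) = edist x y.
Proof.
  unfold norm2, edist. intro Hu. f_equal.
  destruct u as [u1 u2], x as [x1 x2], y as [y1 y2]; simpl in *.
  destruct b; simpl; nsatz.
Qed.

Lemma aff_pow_rot60 k : aff_pow rot60 k = cmap false 0 (omega ^ k).
Proof.
  induction k as [|k IH]; [symmetry; exact cmap_aff_id|].
  rewrite aff_pow_S, IH, <- cmap_rot60, cmap_comp. f_equal. simpl. ring.
Qed.

Lemma aff_pow_transl (v : C) n : aff_pow (cmap false v 1) n = cmap false (INR n * v) 1.
Proof.
  induction n as [|n IH].
  - rewrite aff_pow_0, <- cmap_aff_id. f_equal. simpl. ring.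
  - rewrite aff_pow_S, IH, cmap_comp, S_INR, RtoC_plus. f_equal; simpl; ring.
Qed.

(* [(1 - t) (1 + t + ... + t^5) = 1 - t^6 = 0] *)
Lemma aff_pow6_rotation (w t : C) : eis_unit t -> t <> 1 -> aff_pow (cmap false w t) 6 = aff_id.
Proof.
  intros Ht Ht1. assert (H6 := eis_unit_pow6 t Ht). simpl in H6.
  assert (Hnz : 1 - t <> 0) by (intro E; apply Ht1; symmetry; now apply Ceq_minus).
  rewrite !aff_pow_S, aff_pow_0, comp_id_r, !cmap_comp, <- cmap_aff_id.
  cbn [conjb xorb]. f_equal; [|rewrite <- H6; ring].
  transitivity (w * (1 - t * (t * (t * (t * (t * (t * 1)))))) / (1 - t)); [field; exact Hnz|].
  rewrite H6. field. exact Hnz.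
Qed.

(** * The group [M] and its extension by conjugation *)

Definition inG (b : bool) (f : affmap) : Prop :=
  exists v u, eisenstein v /\ eis_unit u /\ f = cmap b v u.

Lemma inG_intro b (v u : C) : eisenstein v -> eis_unit u -> inG b (cmap b v u).
Proof. intros Hv Hu. now exists v, u. Qed.

Lemma inG_cmap b (v u : C) : inG b (cmap b v u) -> eisenstein v /\ eis_unit u.
Proof. intros (v' & u' & Hv & Hu & E). apply cmap_inj in E as [-> ->]. auto. Qed.

Lemma inG_comp b b' f g : inG b f -> inG b' g -> inG (xorb b b') (aff_comp f g).
Proof.
  intros (v & u & Hv & Hu & ->) (v' & u' & Hv' & Hu' & ->). rewrite cmap_comp.
  apply inG_intro.
  - apply eisenstein_add, eisenstein_mul, eisenstein_conjb; auto. apply Hu.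
  - apply eis_unit_mul, eis_unit_conjb; auto.
Qed.

Lemma inG_inv b f : inG b f -> inG b (aff_inv f).
Proof.
  intros (v & u & Hv & Hu & ->). rewrite cmap_inv by now apply eis_unit_neq0.
  unfold Cdiv. rewrite eis_unit_inv by exact Hu. apply inG_intro.
  - apply eisenstein_opp, eisenstein_conjb, eisenstein_mul, eisenstein_conj; auto. apply Hu.
  - now apply eis_unit_conjb, (eis_unit_conjb true).
Qed.

Lemma is_affine_inG b f : inG b f -> is_affine f.
Proof. intros (v & u & _ & Hu & ->). now apply is_affine_cmap, eis_unit_neq0. Qed.

Lemma inM_inG g : inM g <-> inG false g.
Proof.
  assert (Hform : forall (m n : Z) k,
    aff_comp (transl ((IZR m + IZR n / 2)%R, (IZR n * (sqrt 3 / 2))%R))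
             (Nat.iter k (aff_comp rot60) aff_id) =
    cmap false (IZR m + IZR n * omega) (omega ^ k)).
  { intros m n k. change (Nat.iter k (aff_comp rot60) aff_id) with (aff_pow rot60 k).
    rewrite aff_pow_rot60, eisenstein_coords, <- cmap_transl, cmap_comp.
    set (z := omega ^ k). f_equal; simpl; ring. }
  split.
  - intros (m & n & k & ->). rewrite (Hform m n k).
    apply inG_intro; [now exists m, n|apply eis_unit_omega_pow].
  - intros (v & u & [m [n ->]] & Hu & ->).
    destruct (eis_unit_is_omega_pow u Hu) as [k ->].
    exists m, n, k. symmetry. exact (Hform m n k).
Qed.

Lemma inM_comp g h : inM g -> inM h -> inM (aff_comp g h).
Proof. rewrite !inM_inG. exact (inG_comp false false g h). Qed.

Lemma inM_inv g : inM g -> inM (aff_inv g).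
Proof. rewrite !inM_inG. apply inG_inv. Qed.

Lemma inM_conj h g : inM h -> inM g -> inM (conj_by h g).
Proof. intros Hh Hg. unfold conj_by. auto using inM_comp, inM_inv. Qed.

Lemma is_affine_inM g : inM g -> is_affine g.
Proof. rewrite inM_inG. apply is_affine_inG. Qed.

Lemma inM_transl (a : C) : eisenstein a -> inM (cmap false a 1).
Proof. intro Ha. apply inM_inG, inG_intro; [exact Ha|exact eis_unit_1]. Qed.

Lemma inM_transl_1 : inM (cmap false 1 1).
Proof. exact (inM_transl 1 (eisenstein_int 1)). Qed.

Lemma inM_id : inM aff_id.
Proof. rewrite <- cmap_aff_id. exact (inM_transl 0 (eisenstein_int 0)). Qed.

Lemma inM_rot60 : inM rot60.
Proof.
  rewrite <- cmap_rot60. apply inM_inG, inG_intro; [exact (eisenstein_int 0)|exact eis_unit_omega].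
Qed.

Lemma inM_pow g n : inM g -> inM (aff_pow g n).
Proof.
  intro Hg. induction n as [|n IH]; [exact inM_id|rewrite aff_pow_S; now apply inM_comp].
Qed.

Section Generation.

Variable P : affmap -> Prop.
Hypothesis P_id : P aff_id.
Hypothesis P_transl_1 : forall g, inM g -> P g -> P (aff_comp (cmap false 1 1) g).
Hypothesis P_rot60 : forall g, inM g -> P g -> P (aff_comp rot60 g).

Let transl_closed (a : C) : Prop :=
  forall g, inM g -> P g -> P (aff_comp (cmap false a 1) g).

Lemma P_rot60_pow k g : inM g -> P g -> P (aff_comp (aff_pow rot60 k) g).
Proof.
  intros Hg Pg. induction k as [|k IH]; [now rewrite aff_pow_0, comp_id_l|].
  rewrite aff_pow_S, <- comp_assoc.
  apply P_rot60; [apply inM_comp; [apply inM_pow, inM_rot60|exact Hg]|exact IH].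
Qed.

(* [z |-> z + omega ^ k] is [rot60 ^ k (z |-> z + 1) rot60 ^ (5 k)]. *)
Lemma P_transl_omega_pow k : transl_closed (omega ^ k).
Proof.
  intros g Hg Pg.
  replace (cmap false (omega ^ k) 1)
    with (aff_comp (aff_pow rot60 k) (aff_comp (cmap false 1 1) (aff_pow rot60 (5 * k)))).
  2: { assert (H6 : omega ^ k * omega ^ (5 * k) = 1).
       { rewrite <- Cpow_add_r. replace (k + 5 * k)%nat with (6 * k)%nat by lia.
         now rewrite Cpow_mult_r, omega_pow6, Cpow_1_l. }
       rewrite !aff_pow_rot60, !cmap_comp. cbn [conjb xorb].
       set (z := omega ^ k) in *. f_equal; [ring|now rewrite Cmult_1_l]. }
  assert (Hg' : inM (aff_comp (aff_pow rot60 (5 * k)) g))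
    by (apply inM_comp; [apply inM_pow, inM_rot60|exact Hg]).
  rewrite <- !comp_assoc. apply P_rot60_pow.
  - apply inM_comp; [exact inM_transl_1|exact Hg'].
  - apply P_transl_1; [exact Hg'|]. now apply P_rot60_pow.
Qed.

Lemma P_transl_nat (a : C) n : eisenstein a -> transl_closed a -> transl_closed (INR n * a).
Proof.
  intros Ha Pa g Hg Pg. induction n as [|n IH].
  - replace (cmap false (INR 0 * a) 1) with aff_id; [now rewrite comp_id_l|].
    rewrite <- cmap_aff_id. f_equal. simpl. ring.
  - replace (cmap false (INR (S n) * a) 1)
      with (aff_comp (cmap false a 1) (cmap false (INR n * a) 1))
      by (rewrite cmap_comp, S_INR, RtoC_plus; f_equal; simpl; ring).
    assert (Hna : eisenstein (INR n * a)).
    { rewrite INR_IZR_INZ. apply eisenstein_mul; [apply eisenstein_int|exact Ha]. }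
    rewrite <- comp_assoc. apply Pa; [|exact IH].
    apply inM_comp; [now apply inM_transl|exact Hg].
Qed.

Lemma P_transl_int (a : C) (m : Z) : eisenstein a ->
  transl_closed a -> transl_closed (- a) -> transl_closed (IZR m * a).
Proof.
  intros Ha Pa Pna. destruct m as [|p|p].
  - exact (P_transl_nat a 0 Ha Pa).
  - rewrite <- positive_nat_Z, <- INR_IZR_INZ. exact (P_transl_nat a _ Ha Pa).
  - replace (IZR (Z.neg p) * a) with (INR (Pos.to_nat p) * (- a))
      by (rewrite <- Pos2Z.opp_pos, opp_IZR, <- positive_nat_Z, <- INR_IZR_INZ, RtoC_opp; ring).
    exact (P_transl_nat (- a) _ (eisenstein_opp a Ha) Pna).
Qed.

Lemma inM_ind g : inM g -> P g.
Proof.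
  intro Hg. apply inM_inG in Hg as (v & u & [m [n ->]] & Hu & ->).
  destruct (eis_unit_is_omega_pow u Hu) as [k ->].
  replace (cmap false (IZR m + IZR n * omega) (omega ^ k))
    with (aff_comp (cmap false (IZR m * 1) 1)
            (aff_comp (cmap false (IZR n * omega) 1) (aff_pow rot60 k)))
    by (rewrite aff_pow_rot60, !cmap_comp; set (z := omega ^ k); f_equal; simpl; ring).
  assert (Hk : inM (aff_pow rot60 k)) by (apply inM_pow, inM_rot60).
  assert (Pk : P (aff_pow rot60 k))
    by (rewrite <- comp_id_r; exact (P_rot60_pow k _ inM_id P_id)).
  apply P_transl_int; [exact (eisenstein_int 1)|exact (P_transl_omega_pow 0)| | |].
  - replace (Copp 1) with (omega ^ 3) by (simpl; ring [omega_sq]). apply P_transl_omega_pow.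
  - apply inM_comp; [|exact Hk].
    apply inM_transl, eisenstein_mul; [apply eisenstein_int|apply eisenstein_omega].
  - apply P_transl_int; [exact eisenstein_omega| | |exact Hk|exact Pk].
    + replace omega with (omega ^ 1) by (simpl; ring). apply P_transl_omega_pow.
    + replace (- omega) with (omega ^ 4) by (simpl; ring [omega_sq]). apply P_transl_omega_pow.
Qed.

End Generation.

(** * The affine normalizer *)

Lemma inNA_inG b f : inG b f -> inNA f.
Proof.
  intro Hf. split; [exact (is_affine_inG b f Hf)|].
  split; intros g Hg; apply inM_inG; apply inM_inG in Hg;
    replace false with (xorb b (xorb false b)) by now destruct b.
  - apply inG_comp; [exact Hf|]. apply inG_comp; [exact Hg|]. now apply inG_inv.
  - apply inG_comp; [now apply inG_inv|]. apply inG_comp; [exact Hg|exact Hf].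
Qed.

Lemma inNA_inv f : inNA f -> inNA (aff_inv f).
Proof.
  intros (Hf & Hconj & Hconj'). split; [now apply is_affine_inv|].
  rewrite aff_inv_inv by exact Hf. now split.
Qed.

(* Comparing traces of the linear parts: [tr (A R A^-1) = tr R = 1] forces [Re t = 1/2]. *)
Lemma rot60_intertwiner f (w t : C) : is_affine f -> norm2 t = 1%R ->
  aff_comp f rot60 = aff_comp (cmap false w t) f ->
  exists b u, t = conjb b omega /\ f = cmap b (b1 f, b2 f) u.
Proof.
  destruct f as [p1 p2 a b c d], t as [t1 t2].
  unfold is_affine, aff_det, norm2, rot60, cmap, aff_comp; simpl.
  intros Hdet Hnorm E. injection E as _ _ E11 E12 E21 E22.
  pose proof sqrt3_sq as Hs. assert (Hhalf : (/ 2 * 2 = 1)%R) by field.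
  assert (Ht1 : t1 = (1 / 2)%R).
  { assert (Htr : ((2 * t1 - 1) * (a * d - b * c) = 0)%R) by (unfold Rdiv in *; nsatz).
    apply Rmult_integral in Htr as [Htr|Htr]; [lra|contradiction]. }
  subst t1.
  assert (Ht2 : ((t2 - sqrt 3 / 2) * (t2 + sqrt 3 / 2) = 0)%R) by nra.
  apply Rmult_integral in Ht2 as [Ht2|Ht2].
  - assert (t2 = sqrt 3 / 2)%R by lra. subst t2.
    assert (b = - c)%R by (unfold Rdiv in *; nsatz).
    assert (d = a) by (unfold Rdiv in *; nsatz). subst b d.
    exists false, (a, c). split; reflexivity.
  - assert (t2 = - (sqrt 3 / 2))%R by lra. subst t2.
    assert (b = c) by (unfold Rdiv in *; nsatz).
    assert (d = - a)%R by (unfold Rdiv in *; nsatz). subst b d.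
    exists true, (a, c). split; [|reflexivity].
    unfold omega. apply injective_projections; simpl; ring.
Qed.

Lemma inNA_cmap_eisenstein b (v u : C) : inNA (cmap b v u) -> eisenstein u.
Proof.
  intros (Haff & Hconj & _).
  specialize (Hconj _ inM_transl_1). change (inM (conj_by (cmap b v u) (cmap false 1 1))) in Hconj.
  rewrite conj_by_cmap, conjb_1 in Hconj by exact (cmap_neq0 b v u Haff).
  apply inM_inG, inG_cmap in Hconj as [Hu _].
  replace u with ((1 - 1) * v + u * 1) by ring. exact Hu.
Qed.

(* [norm2 u * norm2 (/ u) = 1], and a nonzero Eisenstein integer has norm at least 1. *)
Lemma eis_unit_of_eisenstein_inv (u : C) : eisenstein u -> eisenstein (/ u) -> u <> 0 ->
  eis_unit u.
Proof.
  intros Hu Huinv Hu0. split; [exact Hu|].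
  assert (Hprod : (norm2 u * norm2 (/ u) = 1)%R).
  { rewrite <- norm2_mul, Cinv_r by exact Hu0. unfold norm2; simpl; ring. }
  assert (~ (norm2 u < 1)%R) by (intro Hlt; exact (Hu0 (eisenstein_norm2_lt1 u Hu Hlt))).
  assert (~ (norm2 (/ u) < 1)%R).
  { intro Hlt. apply C1_nz. rewrite <- (Cinv_r u Hu0), (eisenstein_norm2_lt1 _ Huinv Hlt).
    ring. }
  nra.
Qed.

Lemma inG_of_inNA f : inNA f -> exists b, inG b f.
Proof.
  intro Hf. pose proof Hf as (Haff & Hconj & _).
  assert (Hrot := Hconj _ inM_rot60). change (inM (conj_by f rot60)) in Hrot.
  apply inM_inG in Hrot as (w & t & Hw & [_ Ht] & E).
  destruct (rot60_intertwiner f w t Haff Ht (conj_by_intertwines f _ _ Haff E))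
    as (b & u & -> & Ef).
  set (v := (b1 f, b2 f)) in Ef. rewrite Ef in Haff, Hf, E.
  assert (Hu0 := cmap_neq0 b v u Haff).
  assert (Huinv : eisenstein (/ u)).
  { assert (Hf' := inNA_inv _ Hf). rewrite cmap_inv in Hf' by exact Hu0.
    rewrite <- (conjb_involutive b (/ u)).
    now apply eisenstein_conjb, (inNA_cmap_eisenstein _ _ _ Hf'). }
  rewrite <- cmap_rot60, conj_by_cmap, conjb_0 in E by exact Hu0.
  apply cmap_inj in E as [Ew _].
  exists b, v, u. split; [|split; [|exact Ef]].
  - replace v with (conjb b omega * w)
      by now rewrite <- Ew, Cmult_0_r, Cplus_0_r, Cmult_assoc, conjb_omega_mul, Cmult_1_l.
    apply eisenstein_mul; [apply eisenstein_conjb, eisenstein_omega|exact Hw].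
  - apply eis_unit_of_eisenstein_inv; [exact (inNA_cmap_eisenstein b v u Hf)|exact Huinv|exact Hu0].
Qed.

(** * Affinities of the orbifold *)

Lemma induced_eq_sym f g : induced_eq f g -> induced_eq g f.
Proof.
  intros H x. destruct (H x) as (h & Hh & E). exists (aff_inv h). split.
  - now apply inM_inv.
  - now rewrite <- E, aff_app_inv_l by now apply is_affine_inM.
Qed.

Lemma induced_eq_trans f g k : induced_eq f g -> induced_eq g k -> induced_eq f k.
Proof.
  intros H H' x. destruct (H x) as (h & Hh & E), (H' x) as (h' & Hh' & E').
  exists (aff_comp h' h). split; [now apply inM_comp|now rewrite aff_app_comp, E].
Qed.

Lemma induced_eq_inG b f : inG b f -> induced_eq f (cmap b 0 1).
Proof.
  intros (v & u & Hv & Hu & ->) x. exists (aff_inv (cmap false v u)). split.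
  - now apply inM_inv, inM_inG, inG_intro.
  - replace (cmap b v u) with (aff_comp (cmap false v u) (cmap b 0 1))
      by (rewrite cmap_comp; simpl; f_equal; ring).
    rewrite aff_app_comp, aff_app_inv_l; [reflexivity|].
    now apply is_affine_cmap, eis_unit_neq0.
Qed.

(* At [x = (2 + i) / 10], a [g : z |-> v + u z] of [M] with [g x = conj x] would have
   [|v| < 1], hence [v = 0] and [u = conj x / x = (3 - 4 i) / 5], which is not in [Z[omega]]. *)
Lemma not_induced_eq_id_refl_x : ~ induced_eq aff_id refl_x.
Proof.
  intro H. destruct (H (1 / 5, 1 / 10)%R) as (g & Hg & E).
  apply inM_inG in Hg as (v & u & Hv & [[m [n Eu]] Hu] & ->).
  rewrite aff_app_id, <- cmap_refl_x, !aff_app_cmap in E.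
  destruct v as [v1 v2], u as [u1 u2]. unfold norm2 in Hu; simpl in Hu.
  apply (f_equal fst) in E as E1. apply (f_equal snd) in E as E2. simpl in E1, E2.
  assert (Hv0 : ((v1, v2) : C) = 0).
  { apply (eisenstein_norm2_lt1 _ Hv). unfold norm2; simpl.
    replace v1 with (1 / 5 - u1 / 5 + u2 / 10)%R by lra.
    replace v2 with (- (1 / 10) - u1 / 10 - u2 / 5)%R by lra.
    assert (Hu1 : (-1 <= u1 <= 1)%R) by nra. assert (Hu2 : (-1 <= u2 <= 1)%R) by nra.
    nra. }
  apply (f_equal fst) in Hv0 as Hv1. apply (f_equal snd) in Hv0 as Hv2. simpl in Hv1, Hv2.
  apply (f_equal fst) in Eu. unfold omega in Eu. simpl in Eu.
  assert (H56 : (IZR (5 * (2 * m + n)) = 6)%R).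
  { rewrite mult_IZR, plus_IZR, mult_IZR. nra. }
  apply eq_IZR in H56. lia.
Qed.

Lemma inG_orientation_of_induced_eq b b' f g :
  inG b f -> inG b' g -> induced_eq f g -> b = b'.
Proof.
  intros Hf Hg Hfg.
  assert (H : induced_eq (cmap b 0 1) (cmap b' 0 1)).
  { apply (induced_eq_trans _ f); [apply induced_eq_sym, induced_eq_inG, Hf|].
    apply (induced_eq_trans _ g); [exact Hfg|apply induced_eq_inG, Hg]. }
  pose proof not_induced_eq_id_refl_x as Hid.
  rewrite <- cmap_aff_id, <- cmap_refl_x in Hid.
  destruct b, b'; [reflexivity|exfalso; exact (Hid (induced_eq_sym _ _ H))
                  |exfalso; exact (Hid H)|reflexivity].
Qed.

Lemma inNA_induced_eq_id_or_refl_x f : inNA f -> induced_eq f aff_id \/ induced_eq f refl_x.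
Proof.
  intro Hf. destruct (inG_of_inNA f Hf) as [b Hb]. apply induced_eq_inG in Hb.
  destruct b; [right; rewrite <- cmap_refl_x|left; rewrite <- cmap_aff_id]; exact Hb.
Qed.

Lemma induced_isometry_inNA f : inNA f -> induced_isometry f.
Proof.
  intro Hf. pose proof Hf as (Haff & Hconj & Hconj').
  destruct (inG_of_inNA f Hf) as (b & v & u & _ & [_ Hu] & Ef).
  assert (Hiso : forall x y, edist (aff_app f x) (aff_app f y) = edist x y)
    by (intros; rewrite Ef; now apply edist_cmap).
  intros x y. unfold qdist. apply Glb_Rbar_eqset. intro r. split.
  - intros (g & Hg & ->). exists (aff_comp (aff_inv f) (aff_comp g f)).
    split; [now apply Hconj'|].
    rewrite !aff_app_comp, <- (Hiso x), <- (aff_app_comp f (aff_inv f)), aff_inv_r, aff_app_id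
      by exact Haff.
    reflexivity.
  - intros (g & Hg & ->). exists (aff_comp f (aff_comp g (aff_inv f))).
    split; [now apply Hconj|].
    rewrite !aff_app_comp, aff_app_inv_l by exact Haff. symmetry; apply Hiso.
Qed.

(** * The map to [Out(M)] *)

Lemma out_eq_conj_by_comp f g : is_affine f -> is_affine g ->
  out_eq (conj_by (aff_comp f g)) (fun k => conj_by f (conj_by g k)).
Proof.
  intros Hf Hg. exists aff_id. split; [exact inM_id|]. intros k _.
  rewrite aff_inv_id, comp_id_l, comp_id_r. now apply conj_by_aff_comp.
Qed.

Lemma out_eq_of_inG b f g : inG b f -> inG b g -> out_eq (conj_by f) (conj_by g).
Proof.
  intros Hf Hg. exists (aff_comp f (aff_inv g)). split.
  - apply inM_inG. rewrite <- (xorb_nilpotent b). now apply inG_comp, inG_inv.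
  - intros k _. assert (Hf' := is_affine_inG b f Hf). assert (Hg' := is_affine_inG b g Hg).
    change (conj_by f k = conj_by (aff_comp f (aff_inv g)) (conj_by g k)).
    rewrite <- conj_by_aff_comp by auto using is_affine_comp, is_affine_inv.
    now rewrite <- comp_assoc, aff_inv_l, comp_id_r.
Qed.

(* The rotation part of [conj_by f rot60] is [omega] or [conj omega] according to the
   orientation of [f], and conjugating by an element of [M] does not change it. *)
Lemma inG_orientation_of_out_eq b b' f g :
  inG b f -> inG b' g -> out_eq (conj_by f) (conj_by g) -> b = b'.
Proof.
  intros (v & u & _ & Hu & ->) (v' & u' & _ & Hu' & ->) (h & Hh & E).
  apply inM_inG in Hh as (w & t & _ & Ht & ->).
  specialize (E rot60 inM_rot60). change (conj_by (cmap b v u) rot60 =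
    conj_by (cmap false w t) (conj_by (cmap b' v' u') rot60)) in E.
  rewrite <- cmap_rot60, !conj_by_cmap in E by auto using eis_unit_neq0.
  apply cmap_inj in E as [_ E]. simpl in E.
  pose proof sqrt3_pos. unfold omega in E.
  destruct b, b'; auto; apply (f_equal snd) in E; simpl in E; lra.
Qed.

Lemma out_eq_of_induced_eq f g : inNA f -> inNA g -> induced_eq f g ->
  out_eq (conj_by f) (conj_by g).
Proof.
  intros Hf Hg Hfg. destruct (inG_of_inNA f Hf) as [b Hb], (inG_of_inNA g Hg) as [b' Hb'].
  rewrite <- (inG_orientation_of_induced_eq b b' f g Hb Hb' Hfg) in Hb'.
  exact (out_eq_of_inG b f g Hb Hb').
Qed.

Lemma induced_eq_of_out_eq f g : inNA f -> inNA g -> out_eq (conj_by f) (conj_by g) ->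
  induced_eq f g.
Proof.
  intros Hf Hg Hfg. destruct (inG_of_inNA f Hf) as [b Hb], (inG_of_inNA g Hg) as [b' Hb'].
  rewrite <- (inG_orientation_of_out_eq b b' f g Hb Hb' Hfg) in Hb'.
  apply (induced_eq_trans _ (cmap b 0 1)); [|apply induced_eq_sym];
    now apply induced_eq_inG.
Qed.

(** * Automorphisms of [M] *)

Section Automorphism.

Variable alpha : affmap -> affmap.
Hypothesis Halpha : is_autM alpha.

Lemma aut_inM g : inM g -> inM (alpha g).
Proof. apply Halpha. Qed.

Lemma aut_comp g h : inM g -> inM h -> alpha (aff_comp g h) = aff_comp (alpha g) (alpha h).
Proof. apply Halpha. Qed.

Lemma aut_inj g h : inM g -> inM h -> alpha g = alpha h -> g = h.
Proof. apply Halpha. Qed.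

Lemma aut_surj h : inM h -> exists g, inM g /\ alpha g = h.
Proof. apply Halpha. Qed.

Lemma aut_id : alpha aff_id = aff_id.
Proof.
  assert (E : aff_comp (alpha aff_id) (alpha aff_id) = alpha aff_id)
    by now rewrite <- aut_comp, comp_id_l by exact inM_id.
  set (z := alpha aff_id) in *. assert (Hz := is_affine_inM _ (aut_inM _ inM_id)).
  transitivity (aff_comp (aff_inv z) (aff_comp z z)).
  - now rewrite comp_assoc, aff_inv_l, comp_id_l.
  - rewrite E. now apply aff_inv_l.
Qed.

Lemma aut_inv g : inM g -> alpha (aff_inv g) = aff_inv (alpha g).
Proof.
  intro Hg. apply aff_inv_unique; [exact (is_affine_inM _ (aut_inM _ Hg))|].
  rewrite <- aut_comp, aff_inv_l; [exact aut_id|now apply is_affine_inM|now apply inM_inv|exact Hg].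
Qed.

Lemma aut_conj h g : inM h -> inM g -> alpha (conj_by h g) = conj_by (alpha h) (alpha g).
Proof.
  intros Hh Hg. unfold conj_by.
  rewrite !aut_comp, aut_inv; auto using inM_comp, inM_inv.
Qed.

Lemma aut_pow g n : inM g -> alpha (aff_pow g n) = aff_pow (alpha g) n.
Proof.
  intro Hg. induction n as [|n IH]; [exact aut_id|].
  rewrite !aff_pow_S, aut_comp, IH; [reflexivity|exact Hg|now apply inM_pow].
Qed.

(* The elements of [M] that are not translations have order dividing 6,
   and the nontrivial translations do not. *)
Lemma aut_transl_1 : exists p : C, p <> 0 /\ alpha (cmap false 1 1) = cmap false p 1.
Proof.
  assert (Hm := aut_inM _ inM_transl_1). apply inM_inG in Hm as (p & t & _ & Ht & E).
  assert (Hnot_id : forall n, alpha (aff_pow (cmap false 1 1) (S n)) <> aff_id).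
  { intros n Hn. rewrite <- aut_id in Hn.
    apply aut_inj in Hn; [|apply inM_pow, inM_transl_1|exact inM_id].
    rewrite aff_pow_transl, <- cmap_aff_id in Hn. apply cmap_inj in Hn as [Hn _].
    apply (f_equal fst) in Hn. unfold Cmult, RtoC in Hn. cbn [fst snd] in Hn.
    rewrite S_INR in Hn. pose proof (pos_INR n). lra. }
  destruct (Ceq_dec t 1) as [->|Ht1].
  - exists p. split; [|exact E]. intros ->. apply (Hnot_id 0%nat).
    rewrite aut_pow, E, aff_pow_S, aff_pow_0, comp_id_r by exact inM_transl_1.
    exact cmap_aff_id.
  - exfalso. apply (Hnot_id 5%nat).
    rewrite aut_pow, E by exact inM_transl_1. now apply aff_pow6_rotation.
Qed.

(* Transport by [alpha] the relation [rho^2 tau rho^-2 o tau = rho tau rho^-1] of [M]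
   (i.e. [omega^2 + 1 = omega]), where [tau : z |-> z + 1] and [rho = rot60]. *)
Lemma aut_rot60 (p : C) : p <> 0 -> alpha (cmap false 1 1) = cmap false p 1 ->
  exists b w, alpha rot60 = cmap false w (conjb b omega).
Proof.
  intros Hp Ep. assert (Hr := aut_inM _ inM_rot60). apply inM_inG in Hr as (w & t & _ & Ht & Er).
  assert (Ht0 := eis_unit_neq0 t Ht).
  assert (Hom0 := eis_unit_neq0 omega eis_unit_omega).
  assert (Rel : aff_comp (conj_by rot60 (conj_by rot60 (cmap false 1 1))) (cmap false 1 1) =
                conj_by rot60 (cmap false 1 1)).
  { rewrite <- cmap_rot60, !conj_by_cmap, cmap_comp by exact Hom0. cbn [conjb xorb].
    f_equal; ring [omega_sq]. }
  apply (f_equal alpha) in Rel.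
  rewrite aut_comp, !aut_conj, Er, Ep, !conj_by_cmap, cmap_comp in Rel
    by auto using inM_conj, inM_rot60, inM_transl_1.
  apply cmap_inj in Rel as [Rel _]. cbn [conjb] in Rel.
  assert (Hroot : (t * t - t + 1) * p = 0) by (apply Ceq_minus in Rel; rewrite <- Rel; ring).
  apply Cmult_eq0 in Hroot as [Hroot|Hroot]; [|contradiction].
  destruct (omega_roots t Hroot) as [b ->]. now exists b, w.
Qed.

Lemma aut_eq_conj_by f : is_affine f ->
  alpha (cmap false 1 1) = conj_by f (cmap false 1 1) -> alpha rot60 = conj_by f rot60 ->
  forall g, inM g -> alpha g = conj_by f g.
Proof.
  intros Hf E1 Er. apply inM_ind.
  - rewrite aut_id. symmetry. now apply conj_by_id.
  - intros g Hg IH. rewrite aut_comp, conj_by_comp, E1, IH; auto using inM_transl_1.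
  - intros g Hg IH. rewrite aut_comp, conj_by_comp, Er, IH; auto using inM_rot60.
Qed.

Lemma inNA_of_aut_eq_conj_by f : is_affine f ->
  (forall g, inM g -> alpha g = conj_by f g) -> inNA f.
Proof.
  intros Hf E. split; [exact Hf|]. split; intros g Hg.
  - change (inM (conj_by f g)). rewrite <- E by exact Hg. now apply aut_inM.
  - destruct (aut_surj g Hg) as (h & Hh & <-).
    rewrite E by exact Hh. unfold conj_by.
    now rewrite !comp_assoc, aff_inv_l, comp_id_l, <- comp_assoc, aff_inv_l, comp_id_r.
Qed.

Lemma aut_out_eq_conj_by : exists f, inNA f /\ out_eq alpha (conj_by f).
Proof.
  destruct aut_transl_1 as (p & Hp & Ep).
  destruct (aut_rot60 p Hp Ep) as (b & w & Er).
  set (t := conjb b omega) in Er.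
  set (f := cmap b (t * w) p).
  assert (Hf : is_affine f) by now apply is_affine_cmap.
  assert (E : forall g, inM g -> alpha g = conj_by f g).
  { apply aut_eq_conj_by; [exact Hf| |].
    - rewrite Ep. unfold f. rewrite conj_by_cmap, conjb_1 by exact Hp. f_equal; ring.
    - rewrite Er, <- cmap_rot60. unfold f. rewrite conj_by_cmap, conjb_0 by exact Hp.
      f_equal. rewrite Cmult_0_r, Cplus_0_r, Cmult_assoc, (Cmult_comm (1 - t)).
      now rewrite (conjb_omega_mul b : t * (1 - t) = 1), Cmult_1_l. }
  exists f. split; [now apply inNA_of_aut_eq_conj_by|].
  exists aff_id. split; [exact inM_id|]. intros g Hg.
  now rewrite aff_inv_id, comp_id_l, comp_id_r, E.
Qed.

End Automorphism.

Theorem lemma2 :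
  (* Aff(M) = {idt., c-ref.}, the two being distinct *)
  inNA aff_id /\ inNA refl_x /\ ~ induced_eq aff_id refl_x /\
  (forall f, inNA f -> induced_eq f aff_id \/ induced_eq f refl_x) /\
  (* Sym(M) = Aff(M): every affinity of E^2/M is an isometry *)
  (forall f, inNA f -> induced_isometry f) /\
  (* Omega is a well-defined homomorphism Aff(M) -> Out(M) ... *)
  (forall f g, inNA f -> inNA g -> induced_eq f g -> out_eq (conj_by f) (conj_by g)) /\
  (forall f g, inNA f -> inNA g ->
     out_eq (conj_by (aff_comp f g)) (fun x => conj_by f (conj_by g x))) /\
  (* ... which is injective ... *)
  (forall f g, inNA f -> inNA g -> out_eq (conj_by f) (conj_by g) -> induced_eq f g) /\
  (* ... and surjective *)
  (forall alpha, is_autM alpha -> exists f, inNA f /\ out_eq alpha (conj_by f)).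
Proof.
  assert (Hbase : forall b, inNA (cmap b 0 1))
    by (intro b; apply (inNA_inG b), inG_intro; [exact (eisenstein_int 0)|exact eis_unit_1]).
  split; [rewrite <- cmap_aff_id; apply Hbase|].
  split; [rewrite <- cmap_refl_x; apply Hbase|].
  split; [exact not_induced_eq_id_refl_x|].
  split; [exact inNA_induced_eq_id_or_refl_x|].
  split; [exact induced_isometry_inNA|].
  split; [exact out_eq_of_induced_eq|].
  split; [intros f g [Hf _] [Hg _]; now apply out_eq_conj_by_comp|].
  split; [exact induced_eq_of_out_eq|].
  exact aut_out_eq_conj_by.
Qed.
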